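(* Let $\varrho_\pm,p_\pm>0$ with $\varrho_-<\varrho_+$, and fix $\varrho_1>\varrho_+$. For $v_\pm\in\mathbb{R}$ set $u=v_--v_+$, $R=\varrho_--\varrho_+$, $A=\varrho_-v_--\varrho_+v_+$, $B=\varrho_-\varrho_+u^2-(\varrho_+-\varrho_-)(p_+-p_-)$, and, whenever $B>0$, $$\mu_0=\frac AR-\frac1R\sqrt{B\frac{\varrho_1-\varrho_+}{\varrho_1-\varrho_-}},\qquad \mu_1=\frac AR-\frac1R\sqrt{B\frac{\varrho_1-\varrho_-}{\varrho_1-\varrho_+}}.$$ Then for $u$ sufficiently large (depending only on $\varrho_\pm,p_\pm,\varrho_1$) one has $B>0$ and $$v_--\mu_0>0\qquad\text{and}\qquad \mu_1-v_+>0.$$ *)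

From Stdlib Require Import Reals.
Open Scope R_scope.

Definition uu (vm vp : R) : R := vm - vp.
Definition RR (rm rp : R) : R := rm - rp.
Definition AA (rm rp vm vp : R) : R := rm * vm - rp * vp.
Definition BB (rm rp pm pp vm vp : R) : R :=
  rm * rp * (uu vm vp)^2 - (rp - rm) * (pp - pm).

Definition mu0 (rm rp pm pp r1 vm vp : R) : R :=
  AA rm rp vm vp / RR rm rp
  - / RR rm rp * sqrt (BB rm rp pm pp vm vp * ((r1 - rp) / (r1 - rm))).

Definition mu1 (rm rp pm pp r1 vm vp : R) : R :=
  AA rm rp vm vp / RR rm rp
  - / RR rm rp * sqrt (BB rm rp pm pp vm vp * ((r1 - rm) / (r1 - rp))).

From Stdlib Require Import Reals Lra.
Open Scope R_scope.

(* Multiplying by [rp - rm > 0], both inequalities compare a square root of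
   [B k] with a multiple of [u] ([k < 1] for mu0, [k > 1] for mu1).  Squaring,
   each becomes [c < a u^2] with a constant [c] and a coefficient [a > 0] that
   depends only on the densities, and [B > 0] is of the same form; such an
   inequality holds for all large [u]. *)

Lemma sqrt_lt_of_lt_sqr x y : 0 < y -> x < y ^ 2 -> sqrt x < y.
Proof.
  intros Hy Hx. destruct (Rle_dec x 0) as [Hx0 | Hx0].
  - rewrite sqrt_neg_0; lra.
  - rewrite <- (sqrt_pow2 y) by lra. apply sqrt_lt_1; nra.
Qed.

Lemma lt_sqrt_of_sqr_lt x y : 0 <= y -> y ^ 2 < x -> y < sqrt x.
Proof.
  intros Hy Hx. rewrite <- (sqrt_pow2 y) by lra. apply sqrt_lt_1; nra.
Qed.

Lemma eventually_lt_mul_sqr a c :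
  0 < a -> exists U, 0 <= U /\ forall u, U < u -> c < a * u ^ 2.
Proof.
  intros Ha.
  assert (Hca : 0 <= Rabs c / a).
  { apply Rmult_le_pos; [apply Rabs_pos | left; apply Rinv_0_lt_compat, Ha]. }
  exists (1 + Rabs c / a). split; [lra |]. intros u Hu.
  assert (Hcu : c < a * u).
  { assert (c <= Rabs c) by apply Rle_abs.
    assert (Rabs c = a * (Rabs c / a)) by (field; lra). nra. }
  assert (u <= u ^ 2) by nra. nra.
Qed.

Lemma BB_uu rm rp pm pp vm vp :
  BB rm rp pm pp vm vp = rm * rp * uu vm vp ^ 2 - (rp - rm) * (pp - pm).
Proof. reflexivity. Qed.

Section Speeds.

Variables rm rp pm pp r1 vm vp : R.
Hypothesis rm_lt_rp : rm < rp.

Lemma vm_sub_mu0 :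
  vm - mu0 rm rp pm pp r1 vm vp
  = (rp * uu vm vp - sqrt (BB rm rp pm pp vm vp * ((r1 - rp) / (r1 - rm))))
    / (rp - rm).
Proof. unfold mu0, AA, RR, uu. field. lra. Qed.

Lemma mu1_sub_vp :
  mu1 rm rp pm pp r1 vm vp - vp
  = (sqrt (BB rm rp pm pp vm vp * ((r1 - rm) / (r1 - rp))) - rm * uu vm vp)
    / (rp - rm).
Proof. unfold mu1, AA, RR, uu. field. lra. Qed.

Lemma vm_sub_mu0_gt0 :
  0 < rp * uu vm vp ->
  BB rm rp pm pp vm vp * ((r1 - rp) / (r1 - rm)) < (rp * uu vm vp) ^ 2 ->
  0 < vm - mu0 rm rp pm pp r1 vm vp.
Proof.
  intros Hpos Hsq. rewrite vm_sub_mu0.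
  apply Rdiv_lt_0_compat; [| lra].
  apply Rlt_0_minus, sqrt_lt_of_lt_sqr; assumption.
Qed.

Lemma mu1_sub_vp_gt0 :
  0 <= rm * uu vm vp ->
  (rm * uu vm vp) ^ 2 < BB rm rp pm pp vm vp * ((r1 - rm) / (r1 - rp)) ->
  0 < mu1 rm rp pm pp r1 vm vp - vp.
Proof.
  intros Hpos Hsq. rewrite mu1_sub_vp.
  apply Rdiv_lt_0_compat; [| lra].
  apply Rlt_0_minus, lt_sqrt_of_sqr_lt; assumption.
Qed.

End Speeds.

Lemma ratio_in_01 rm rp r1 :
  rm < rp -> rp < r1 -> 0 < (r1 - rp) / (r1 - rm) < 1.
Proof.
  intros Hm H1. split.
  - apply Rdiv_lt_0_compat; lra.
  - apply (Rmult_lt_reg_r (r1 - rm)); [lra |]. field_simplify; lra.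
Qed.

Lemma ratio_gt1 rm rp r1 : rm < rp -> rp < r1 -> 1 < (r1 - rm) / (r1 - rp).
Proof.
  intros Hm H1. apply (Rmult_lt_reg_r (r1 - rp)); [lra |]. field_simplify; lra.
Qed.

Theorem lemma6p1 (rm rp pm pp r1 : R) :
  0 < rm -> 0 < rp -> 0 < pm -> 0 < pp -> rm < rp -> rp < r1 ->
  exists U : R, forall vm vp : R, U < uu vm vp ->
    0 < BB rm rp pm pp vm vp /\
    0 < vm - mu0 rm rp pm pp r1 vm vp /\
    0 < mu1 rm rp pm pp r1 vm vp - vp.
Proof.
  intros Hrm Hrp _ _ Hm H1.
  set (k0 := (r1 - rp) / (r1 - rm)). set (k1 := (r1 - rm) / (r1 - rp)).
  set (d := (rp - rm) * (pp - pm)).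
  assert (Hk0 : 0 < k0 < 1) by exact (ratio_in_01 _ _ _ Hm H1).
  assert (Hk1 : 1 < k1) by exact (ratio_gt1 _ _ _ Hm H1).
  destruct (eventually_lt_mul_sqr (rm * rp) d) as [UB [_ HUB]]; [nra |].
  assert (Ha0 : 0 < rp * (rp - k0 * rm)).
  { apply Rmult_lt_0_compat; [| assert (k0 * rm < rm) by nra]; lra. }
  assert (Ha1 : 0 < rm * (k1 * rp - rm)).
  { apply Rmult_lt_0_compat; [| assert (rp < k1 * rp) by nra]; lra. }
  destruct (eventually_lt_mul_sqr _ (- k0 * d) Ha0) as [U0 [HU0 HU0u]].
  destruct (eventually_lt_mul_sqr _ (k1 * d) Ha1) as [U1 [_ HU1u]].
  exists (Rmax UB (Rmax U0 U1)). intros vm vp Hu.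
  apply Rmax_Rlt in Hu as [HuB Hu]. apply Rmax_Rlt in Hu as [Hu0 Hu1].
  specialize (HUB _ HuB). specialize (HU0u _ Hu0). specialize (HU1u _ Hu1).
  repeat split.
  - rewrite BB_uu. fold d. lra.
  - apply vm_sub_mu0_gt0; [lra | nra |]. rewrite BB_uu. fold d k0. nra.
  - apply mu1_sub_vp_gt0; [lra | nra |]. rewrite BB_uu. fold d k1. nra.
Qed.
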